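(* Let $G$ be a connected graph with vertex set $\{u_1,\dots,u_n\}$, $n\ge2$, and let $\mathcal{H}=\{H_1,\dots,H_n\}$ be a family of graphs. Then $\dim_l(G\circ\mathcal{H})=\operatorname{adim}_l(G\circ\mathcal{H})$ if and only if $\varrho(G,\mathcal{H})=\varrho'(G,\mathcal{H})$.
   Context: All graphs are finite and simple with at least one vertex. $d_G$ is shortest-path distance ($+\infty$ between components), $d_{G,2}=\min\{d_G,2\}$; $s$ distinguishes $x,y$ w.r.t. $d$ if $d(s,x)\ne d(s,y)$. $\dim_l(G)$: minimum size of $S\subseteq V(G)$ such that any two adjacent vertices are distinguished w.r.t. $d_G$ by a vertex of $S$. $\operatorname{adim}_l(G)$: same with $d_{G,2}$ in place of $d_G$; minimum such sets are local adjacency bases. $\Phi$: edgeless graphs. $\mathcal{G}$: class of graphs $H$ such that every local adjacency basis $B$ of $H$ satisfies $B\subseteq N_H(v)$ for some $v$. True twins: $N[x]=N[y]$; let $U_1,\dots,U_k$ be the non-singleton true twin classes of $G$ and $T(G)=\bigcup_jU_j$. Lexicographic product $G\circ\mathcal{H}$: vertex set $\bigcup_i\{u_i\}\times V(H_i)$, $(u_i,v)\sim(u_j,w)$ iff $u_iu_j\in E(G)$, or $i=j$ and $vw\in E(H_i)$. $V_E=\{u_i\in V(G)-T(G): H_i\in\Phi\}$; $I=\{u_i: H_i\in\mathcal{G}\}$; for each $j$ with $I\cap U_j\ne\emptyset$ choose one vertex of $I\cap U_j$ and let $I'_j$ be the remaining vertices ($I'_j=\emptyset$ otherwise); $X_E=I-\bigcup_jI'_j$.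 Relation $\mathcal{R}$ (resp. $\mathcal{R}'$) on $X_E$: $u_i\sim u_j$ and $d_G(u,u_i)=d_G(u,u_j)$ (resp. $d_{G,2}(u,u_i)=d_{G,2}(u,u_j)$) for all $u\in V(G)-(V_E\cup\{u_i,u_j\})$. $\varrho(G,\mathcal{H})$ (resp. $\varrho'(G,\mathcal{H})$) is the minimum $|A|$ over $A\subseteq X_E$ such that every pair in $X_E$ satisfying $\mathcal{R}$ (resp. $\mathcal{R}'$) is distinguished by a vertex of $A$ w.r.t. $d_G$ (resp. $d_{G,2}$). *)

(* Graphs are symmetric irreflexive relations on finTypes. *)
From mathcomp Require Import all_boot.
Set Warnings "-notation-overridden".

Set Implicit Arguments. Unset Strict Implicit. Unset Printing Implicit Defensive.

Section Graphs.
Variables (T : finType) (e : rel T).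

Definition walk_len (x y : T) (k : nat) : bool :=
  [exists p : k.-tuple T, path e x p && (last x p == y)].

(* shortest-path distance d_G; None encodes +infinity (different components).
   The least walk length equals the shortest path length, and any reachable
   vertex is reachable by a walk of length < #|T|. *)
Definition dist (x y : T) : option nat :=
  let k := find (walk_len x y) (iota 0 #|T|) in
  if k < #|T| then Some k else None.

Definition dist2 (x y : T) : option nat :=
  match dist x y with Some k => Some (minn k 2) | None => Some 2 end.

Definition local_gen (d : T -> T -> option nat) (S : {set T}) : bool :=
  [forall x, forall y, e x y ==> [exists s in S, d s x != d s y]].

Definition local_metric_gen (S : {set T}) := local_gen dist S.
Definition local_adj_gen (S : {set T}) := local_gen dist2 S.

(* dim_l and adim_l (minimum sizes; [set: T] is always a generator) *)
Definition dim_l : nat := \big[minn/#|T|]_(S : {set T} | local_metric_gen S) #|S|.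
Definition adim_l : nat := \big[minn/#|T|]_(S : {set T} | local_adj_gen S) #|S|.

Definition local_adj_basis (B : {set T}) : bool :=
  local_adj_gen B && (#|B| == adim_l).

Definition openN (v : T) : {set T} := [set w | e v w].
Definition closedN (v : T) : {set T} := [set w | (w == v) || e v w].

Definition in_classG : bool :=
  [forall B : {set T}, local_adj_basis B ==> [exists v, B \subset openN v]].

Definition edgeless : bool := [forall x, forall y, ~~ e x y].

Definition true_twins (x y : T) : bool := closedN x == closedN y.

Definition in_twin_part (x : T) : bool := [exists y, (y != x) && true_twins x y].

End Graphs.

Section Lex.
Variables (V : finType) (e : rel V) (T : V -> finType) (eH : forall i, rel (T i)).

Definition lexV := {i : V & T i}.

Definition lex_rel : rel lexV := fun x y =>
  e (tag x) (tag y) || ((tag x == tag y) && @eH (tag x) (tagged x) (tagged_as x y)).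

Definition V_E : {set V} := [set u | ~~ in_twin_part e u && edgeless (@eH u)].

Definition I_set : {set V} := [set u | in_classG (@eH u)].

(* rep is a choice, for each true twin class U_j meeting I, of one vertex
   of I :&: U_j (rep u is the vertex chosen in the class of u). *)
Definition valid_choice (rep : V -> V) : Prop :=
  forall u, u \in I_set -> in_twin_part e u ->
    [/\ rep u \in I_set, true_twins e u (rep u) &
        forall v, v \in I_set -> true_twins e u v -> rep v = rep u].

(* X_E = I minus the union of the I'_j *)
Definition X_E (rep : V -> V) : {set V} :=
  [set u in I_set | ~~ in_twin_part e u || (rep u == u)].

Definition relR (d : V -> V -> option nat) (rep : V -> V) (x y : V) : bool :=
  [&& x \in X_E rep, y \in X_E rep, e x y &
   [forall u, (u \notin V_E) && (u != x) && (u != y) ==> (d u x == d u y)]].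

Definition rho_gen (d : V -> V -> option nat) (rep : V -> V) : nat :=
  \big[minn/#|V|]_(A : {set V} | (A \subset X_E rep) &&
      [forall x, forall y, relR d rep x y ==> [exists a in A, d a x != d a y]])
    #|A|.

Definition rho (rep : V -> V) : nat := rho_gen (dist e) rep.
Definition rho' (rep : V -> V) : nat := rho_gen (dist2 e) rep.
End Lex.

(* A local (adjacency) generator of G o H splits into its fibers. Inside the
   fiber over u_i both metrics restrict to min(d_{H_i}, 2), and between fibers
   over u_k <> u_i they are d_G(u_k, u_i), resp. d_{G,2}(u_k, u_i). So every
   fiber must be a local adjacency generator of H_i, and what is left is a
   condition on G alone: each edge u_iu_j is handled either by the fiber over
   one of its ends lying in no open neighborhood of H_i -- which costs one
   vertex more than adim_l(H_i) exactly when H_i is in \mathcal{G} -- or by a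
   third nonempty fiber whose base vertex separates u_i and u_j. Both
   dimensions are therefore the sum of the adim_l(H_i) plus the minimum of that
   condition. Among true twins in I at most one can do without the extra
   vertex, and exchanging the extra vertices of the dropped twins against their
   representative identifies that minimum with |U_j I'_j| + rho, resp.
   |U_j I'_j| + rho'. *)

From mathcomp Require Import all_boot zify.

Set Implicit Arguments. Unset Strict Implicit. Unset Printing Implicit Defensive.

Section Walks.
Variables (T : finType) (e : rel T).

Lemma walk_len0 x y : walk_len e x y 0 = (x == y).
Proof.
apply/existsP/eqP; last by move=> ->; exists [tuple]; rewrite /= eqxx.
by case=> p /andP[_]; rewrite (tuple0 p) /= => /eqP.
Qed.

Lemma walk_lenS x y k :
  walk_len e x y k.+1 = [exists z, e x z && walk_len e z y k].
Proof.
apply/existsP/existsP.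
  case=> p; case/tupleP: p => z p /= /andP[/andP[exz pp] lp].
  by exists z; rewrite exz; apply/existsP; exists p; rewrite pp.
case=> z /andP[exz /existsP[p /andP[pp lp]]].
by exists [tuple of z :: p]; rewrite /= exz pp.
Qed.

Lemma walk_len1 x y : walk_len e x y 1 = e x y.
Proof.
rewrite walk_lenS; apply/existsP/idP; last by exists y; rewrite walk_len0 eqxx andbT.
by case=> z /andP[exz]; rewrite walk_len0 => /eqP <-.
Qed.

Lemma walk_len_short x y k :
  walk_len e x y k -> exists2 k', k' < #|T| & walk_len e x y k'.
Proof.
case/existsP=> p /andP[pp /eqP lp]; case: (shortenP pp) lp => p' pp' up' _ lp'.
exists (size p'); first by have /= <- := card_uniqP up'; apply: max_card.
by apply/existsP; exists (in_tuple p'); rewrite pp' lp' eqxx.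
Qed.

Lemma dist_minimal x y k : walk_len e x y k ->
  (forall k', k' < k -> ~~ walk_len e x y k') -> dist e x y = Some k.
Proof.
move=> wk mk; have [k' k'lt wk'] := walk_len_short wk.
have klt : k < #|T|.
  by apply: leq_ltn_trans k'lt; rewrite leqNgt; apply/negP=> /mk; rewrite wk'.
rewrite /dist; set j := find _ _.
have jk : j <= k.
  rewrite leqNgt; apply/negP=> kj.
  by have := before_find 0 kj; rewrite nth_iota // add0n wk.
have jlt : j < #|T| by apply: leq_ltn_trans jk klt.
have wj : walk_len e x y j.
  have := nth_find 0 (_ : has (walk_len e x y) (iota 0 #|T|)).
  rewrite -/j nth_iota // add0n; apply.
  by apply/hasP; exists k => //; rewrite mem_iota.
have kj : k <= j by rewrite leqNgt; apply/negP => /mk; rewrite wj.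
by rewrite jlt; congr Some; apply/eqP; rewrite eqn_leq jk kj.
Qed.

Lemma dist_SomeP x y k : dist e x y = Some k ->
  walk_len e x y k /\ (forall k', walk_len e x y k' -> k <= k').
Proof.
rewrite /dist; set j := find _ _; case: ifP => // jlt [<-].
have hs : has (walk_len e x y) (iota 0 #|T|) by rewrite has_find size_iota.
split; first by have := nth_find 0 hs; rewrite -/j nth_iota // add0n.
move=> k' wk'; rewrite leqNgt; apply/negP=> k'j.
by have := before_find 0 k'j; rewrite nth_iota ?add0n ?wk' // (ltn_trans k'j).
Qed.

Lemma dist_of_walk x y k : walk_len e x y k -> exists m, dist e x y = Some m.
Proof.
move=> w; have [m wm mm] := ex_minnP (ex_intro _ k w).
exists m; apply: dist_minimal => // k' k'm.
by apply/negP=> /mm; rewrite leqNgt k'm.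
Qed.

Lemma connect_walk x y : connect e x y -> exists k, walk_len e x y k.
Proof.
case/connectP=> p pp ->; exists (size p); apply/existsP; exists (in_tuple p).
by rewrite pp eqxx.
Qed.

Lemma dist_refl x : dist e x x = Some 0.
Proof. by apply: dist_minimal; rewrite ?walk_len0. Qed.

Lemma dist2_refl x : dist2 e x x = Some 0.
Proof. by rewrite /dist2 dist_refl. Qed.

Hypothesis eirr : irreflexive e.

Lemma neq_of_edge x y : e x y -> x != y.
Proof. by move=> exy; apply: contraTneq exy => ->; rewrite eirr. Qed.

Lemma dist_edge x y : e x y -> dist e x y = Some 1.
Proof.
move=> exy; apply: dist_minimal; first by rewrite walk_len1.
by case=> // _; rewrite walk_len0; apply: neq_of_edge.
Qed.

Lemma dist2_edge x y : e x y -> dist2 e x y = Some 1.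
Proof. by move=> exy; rewrite /dist2 dist_edge. Qed.

Definition adj_dist (x y : T) : nat := if x == y then 0 else if e x y then 1 else 2.

Lemma adj_dist_le2 x y : adj_dist x y <= 2.
Proof. by rewrite /adj_dist; case: eqP => //; case: (e x y). Qed.

Lemma dist2_adj_dist x y : dist2 e x y = Some (adj_dist x y).
Proof.
rewrite /dist2 /adj_dist; case: eqP => [->|nxy]; first by rewrite dist_refl.
case: ifP => [exy|nexy]; first by rewrite dist_edge.
case E: dist => [m|] //; have [w _] := dist_SomeP E.
case: m E w => [|[|m]] E w //; first by move: w; rewrite walk_len0 => /eqP.
by move: w; rewrite walk_len1 nexy.
Qed.

End Walks.

Section Twins.
Variables (T : finType) (e : rel T).
Hypotheses (esym : symmetric e) (eirr : irreflexive e).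

Lemma walk_len_hom (f : T -> T) : (forall a b, e (f a) (f b) = e a b) ->
  forall k x y, walk_len e x y k -> walk_len e (f x) (f y) k.
Proof.
move=> fe; elim=> [|k IH] x y; first by rewrite !walk_len0 => /eqP ->.
rewrite !walk_lenS => /existsP[z /andP[exz wz]].
by apply/existsP; exists (f z); rewrite fe exz IH.
Qed.

Lemma dist_involutive_auto (f : T -> T) : (forall a b, e (f a) (f b) = e a b) ->
  involutive f -> forall x y, dist e (f x) (f y) = dist e x y.
Proof.
move=> fe fK x y.
have E : walk_len e (f x) (f y) =1 walk_len e x y.
  move=> k; apply/idP/idP; last exact: walk_len_hom.
  by move/(walk_len_hom fe); rewrite !fK.
by rewrite /dist (eq_find E).
Qed.

Lemma true_twins_sym u w : true_twins e u w -> true_twins e w u.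
Proof. by rewrite /true_twins eq_sym. Qed.

Lemma true_twins_trans u v w :
  true_twins e u v -> true_twins e v w -> true_twins e u w.
Proof. by rewrite /true_twins => /eqP ->. Qed.

Lemma true_twinsP u w : true_twins e u w ->
  forall y, (y == u) || e u y = (y == w) || e w y.
Proof. by move/eqP/setP=> tw y; have := tw y; rewrite !inE. Qed.

Lemma true_twins_edge u w : true_twins e u w -> u != w -> e u w.
Proof.
by move=> /true_twinsP/(_ w); rewrite eqxx /= eq_sym => + /negbTE uw; rewrite uw.
Qed.

Lemma true_twins_nbr u w y : true_twins e u w -> y != u -> e w y -> e u y.
Proof. by move=> /true_twinsP/(_ y) tw /negbTE yu ewy; move: tw; rewrite yu ewy orbT. Qed.

Lemma in_twin_partP u w : true_twins e u w -> u != w -> in_twin_part e u.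
Proof. by move=> tw uw; apply/existsP; exists w; rewrite eq_sym uw tw. Qed.

Definition swap (u w a : T) := if a == u then w else if a == w then u else a.

Lemma swap_involutive u w : involutive (swap u w).
Proof.
move=> a; rewrite /swap; case: (eqVneq a u) => [->|au].
  by rewrite eqxx; case: eqVneq.
case: (eqVneq a w) => [->|aw]; first by rewrite eqxx.
by rewrite (negbTE au) (negbTE aw).
Qed.

Lemma swap_twins_hom u w : true_twins e u w ->
  forall a b, e (swap u w a) (swap u w b) = e a b.
Proof.
move=> tw a b; rewrite /swap.
have F c : c != u -> c != w -> e u c = e w c.
  by move=> cu cw; have := true_twinsP tw c; rewrite (negbTE cu) (negbTE cw).
case: (eqVneq u w) => [<-|uw].
  by case: (eqVneq a u) => [->|au]; case: (eqVneq b u) => [->|bu].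
case: (eqVneq a u) => [->|au]; case: (eqVneq b u) => [->|bu].
- by rewrite !eirr.
- by case: (eqVneq b w) => [->|bw]; [rewrite esym | rewrite F].
- by case: (eqVneq a w) => [->|aw]; [rewrite esym | rewrite esym (esym a) F].
case: (eqVneq a w) => [->|aw]; case: (eqVneq b w) => [->|bw] //.
- by rewrite !eirr.
- by rewrite F.
- by rewrite esym (esym a) F.
Qed.

Lemma dist_twin_r u w i : true_twins e u w -> i != u -> i != w ->
  dist e i w = dist e i u.
Proof.
move=> tw iu iw.
have := dist_involutive_auto (swap_twins_hom tw) (@swap_involutive u w) i u.
by rewrite /swap eqxx (negbTE iu) (negbTE iw).
Qed.

Lemma dist_twin_l u w i : true_twins e u w -> i != u -> i != w ->
  dist e w i = dist e u i.
Proof.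
move=> tw iu iw.
have := dist_involutive_auto (swap_twins_hom tw) (@swap_involutive u w) u i.
by rewrite /swap eqxx (negbTE iu) (negbTE iw).
Qed.

Lemma dist2_twin_r u w i : true_twins e u w -> i != u -> i != w ->
  dist2 e i w = dist2 e i u.
Proof. by move=> tw iu iw; rewrite /dist2 (dist_twin_r tw iu iw). Qed.

Lemma dist2_twin_l u w i : true_twins e u w -> i != u -> i != w ->
  dist2 e w i = dist2 e u i.
Proof. by move=> tw iu iw; rewrite /dist2 (dist_twin_l tw iu iw). Qed.

End Twins.

Section ConnectedDist.
Variables (V : finType) (e : rel V).
Hypotheses (eirr : irreflexive e) (econn : forall x y, connect e x y).

Definition gdist i j := odflt 0 (dist e i j).

Lemma gdistE i j : dist e i j = Some (gdist i j).
Proof.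
have [k w] := connect_walk (econn i j).
by have [m E] := dist_of_walk w; rewrite /gdist E.
Qed.

Lemma gdist_walk i j : walk_len e i j (gdist i j).
Proof. by have [] := dist_SomeP (gdistE i j). Qed.

Lemma gdist_min i j k : walk_len e i j k -> gdist i j <= k.
Proof. by have [_] := dist_SomeP (gdistE i j); apply. Qed.

Lemma gdist_edge_le i j l : e i j -> gdist i l <= (gdist j l).+1.
Proof.
move=> eij; apply: gdist_min; rewrite walk_lenS; apply/existsP; exists j.
by rewrite eij gdist_walk.
Qed.

Lemma gdist_edge i j : e i j -> gdist i j = 1.
Proof. by move=> eij; have := gdistE i j; rewrite dist_edge // => -[]. Qed.

Lemma gdist_gt0 i j : i != j -> 0 < gdist i j.
Proof.
by move=> ij; have := gdist_walk i j; case: (gdist i j) => //; rewrite walk_len0 (negbTE ij).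
Qed.

Lemma exists_nbr i : 1 < #|V| -> exists j, e i j.
Proof.
case/card_gt1P=> x [y [_ _ xy]].
have [j ji] : exists j, j != i.
  by case: (eqVneq x i) => [xi|xi]; [exists y; rewrite -xi eq_sym | exists x].
have := gdist_walk i j; case: (gdist i j) => [|k].
  by rewrite walk_len0 eq_sym (negbTE ji).
by rewrite walk_lenS => /existsP[z /andP[ez _]]; exists z.
Qed.

End ConnectedDist.

Section LexDist.
Variables (V : finType) (e : rel V) (T : V -> finType) (eH : forall i, rel (T i)).
Hypotheses (esym : symmetric e) (eirr : irreflexive e)
  (econn : forall x y, connect e x y) (V2 : 1 < #|V|)
  (Tne : forall i, 0 < #|T i|).

Local Notation P := (lex_rel e eH).

Lemma lex_rel_fiber i (a b : T i) : P (Tagged T a) (Tagged T b) = eH a b.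
Proof. by rewrite /lex_rel /= eirr eqxx /= tagged_asE. Qed.

Lemma lex_rel_tag k i (c : T k) (a : T i) : k != i ->
  P (Tagged T c) (Tagged T a) = e k i.
Proof. by move=> ki; rewrite /lex_rel /= (negbTE ki) orbF. Qed.

Definition lex_dist (x y : lexV T) : nat :=
  if tag x == tag y then adj_dist (@eH (tag x)) (tagged x) (tagged_as x y)
  else gdist e (tag x) (tag y).

Lemma lex_dist_fiber i (a b : T i) :
  lex_dist (Tagged T a) (Tagged T b) = adj_dist (@eH i) a b.
Proof. by rewrite /lex_dist /= eqxx tagged_asE. Qed.

Lemma lex_dist_tag k i (c : T k) (a : T i) : k != i ->
  lex_dist (Tagged T c) (Tagged T a) = gdist e k i.
Proof. by move=> ki; rewrite /lex_dist /= (negbTE ki). Qed.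

Lemma lex_dist_edge_le x z y : P x z -> lex_dist x y <= (lex_dist z y).+1.
Proof.
case: x => i a; case: z => j c; case: y => l b.
case: (eqVneq j i) => [ji|ji].
  subst j; rewrite lex_rel_fiber => eac.
  case: (eqVneq l i) => [li|li]; last by rewrite !lex_dist_tag // eq_sym.
  subst l; rewrite !lex_dist_fiber /adj_dist.
  case: (eqVneq c b) => [<-|cb]; first by rewrite eac; case: (a =P c).
  by case: (a =P b); case: (eH a b); case: (eH c b).
rewrite lex_rel_tag 1?eq_sym // => eij.
case: (eqVneq l i) => [li|li].
  by subst l; rewrite lex_dist_fiber lex_dist_tag // gdist_edge // 1?esym // adj_dist_le2.
rewrite lex_dist_tag 1?eq_sym //.
case: (eqVneq l j) => [lj|lj]; first by subst l; rewrite gdist_edge.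
by rewrite lex_dist_tag 1?eq_sym //; apply: gdist_edge_le.
Qed.

Lemma lex_dist_le_walk k x y : walk_len P x y k -> lex_dist x y <= k.
Proof.
elim: k x => [|k IH] x.
  by rewrite walk_len0 => /eqP <-; case: x => i a; rewrite lex_dist_fiber /adj_dist eqxx.
rewrite walk_lenS => /existsP[z /andP[xz wz]].
by apply: leq_trans (lex_dist_edge_le y xz) _; rewrite ltnS IH.
Qed.

Lemma lex_walk_lift k i l : walk_len e i l k.+1 ->
  forall (a : T i) (b : T l), walk_len P (Tagged T a) (Tagged T b) k.+1.
Proof.
elim: k i => [|k IH] i.
  by rewrite walk_len1 => eil a b; rewrite walk_len1 lex_rel_tag ?(neq_of_edge eirr).
rewrite walk_lenS => /existsP[z /andP[eiz wz]] a b.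
have /card_gt0P[c _] := Tne z.
rewrite walk_lenS; apply/existsP; exists (Tagged T c).
by rewrite lex_rel_tag ?(neq_of_edge eirr) ?eiz ?IH.
Qed.

Lemma lex_dist_walk x y : walk_len P x y (lex_dist x y).
Proof.
case: x => i a; case: y => l b.
case: (eqVneq i l) => [il|il]; last first.
  rewrite lex_dist_tag //; have := gdist_walk econn i l.
  by have := gdist_gt0 econn il; case: (gdist e i l) => // k _ w; exact: lex_walk_lift.
subst l; rewrite lex_dist_fiber /adj_dist.
case: (eqVneq a b) => [->|ab]; first by rewrite walk_len0.
case: ifP => eab; first by rewrite walk_len1 lex_rel_fiber.
(* non-adjacent vertices of one fiber are joined through the fiber over a neighbor of [i] *)
have [j eij] := exists_nbr econn i V2.
have ij : i != j := neq_of_edge eirr eij.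
have /card_gt0P[c _] := Tne j.
rewrite walk_lenS; apply/existsP; exists (Tagged T c).
by rewrite lex_rel_tag // eij walk_len1 lex_rel_tag 1?eq_sym // esym.
Qed.

Lemma dist_lex x y : dist P x y = Some (lex_dist x y).
Proof.
apply: dist_minimal; first exact: lex_dist_walk.
by move=> k' lt; apply/negP=> /lex_dist_le_walk; rewrite leqNgt lt.
Qed.

Lemma dist_lex_fiber i (a b : T i) :
  dist P (Tagged T a) (Tagged T b) = Some (adj_dist (@eH i) a b).
Proof. by rewrite dist_lex lex_dist_fiber. Qed.

Lemma dist2_lex_fiber i (a b : T i) :
  dist2 P (Tagged T a) (Tagged T b) = Some (adj_dist (@eH i) a b).
Proof. by rewrite /dist2 dist_lex_fiber (minn_idPl (adj_dist_le2 _ _ _)). Qed.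

Lemma dist_lex_tag k i (c : T k) (a : T i) : k != i ->
  dist P (Tagged T c) (Tagged T a) = dist e k i.
Proof. by move=> ki; rewrite dist_lex lex_dist_tag // gdistE. Qed.

Lemma dist2_lex_tag k i (c : T k) (a : T i) : k != i ->
  dist2 P (Tagged T c) (Tagged T a) = dist2 e k i.
Proof. by move=> ki; rewrite /dist2 dist_lex_tag. Qed.

End LexDist.

Section BigMin.
Variables (I : finType) (P : pred I) (f : I -> nat) (n : nat).

Lemma bigmin_le i : P i -> \big[minn/n]_(j | P j) f j <= f i.
Proof.
move=> Pi; have : i \in index_enum I by rewrite mem_index_enum.
elim: (index_enum I) => // a s IH; rewrite inE big_cons.
case/orP=> [/eqP <-|ins]; first by rewrite Pi geq_minl.
by case: (P a); rewrite ?geq_min IH ?orbT.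
Qed.

Lemma bigmin_attained i0 : P i0 -> f i0 <= n ->
  exists2 i, P i & \big[minn/n]_(j | P j) f j = f i.
Proof.
move=> Pi0 fi0.
have : (\big[minn/n]_(j | P j) f j == n) ||
       [exists i, P i && (\big[minn/n]_(j | P j) f j == f i)].
  apply: (big_ind (fun x => (x == n) || [exists i, P i && (x == f i)])).
  - by rewrite eqxx.
  - by move=> x y Hx Hy; rewrite /minn; case: ltnP.
  - by move=> i Pi; apply/orP; right; apply/existsP; exists i; rewrite Pi eqxx.
case/orP=> [/eqP E|/existsP[i /andP[Pi /eqP E]]]; last by exists i.
by exists i0 => //; apply/eqP; rewrite eqn_leq bigmin_le //= E fi0.
Qed.

End BigMin.

Lemma bigmin_card_shift (A B : finType) (P : pred {set A}) (Q : pred {set B}) c :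
  (exists X, Q X) ->
  (forall X, Q X -> exists2 S, P S & #|S| <= c + #|X|) ->
  (forall S, P S -> exists2 X, Q X & c + #|X| <= #|S|) ->
  \big[minn/#|A|]_(S | P S) #|S| = c + \big[minn/#|B|]_(X | Q X) #|X|.
Proof.
move=> [X0 QX0] up low; have [S0 PS0 _] := up X0 QX0.
have [S PS ES] := @bigmin_attained _ P (fun S => #|S|) #|A| S0 PS0 (max_card _).
have [X QX EX] := @bigmin_attained _ Q (fun X => #|X|) #|B| X0 QX0 (max_card _).
rewrite ES EX; apply/eqP; rewrite eqn_leq; apply/andP; split.
  have [S' PS' le] := up X QX; apply: leq_trans _ le.
  by have := @bigmin_le _ P (fun S => #|S|) #|A| S' PS'; rewrite ES.
have [X' QX' le] := low S PS; apply: leq_trans _ le.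
by have := @bigmin_le _ Q (fun X => #|X|) #|B| X' QX'; rewrite EX leq_add2l.
Qed.

Section AdjacencyGenerators.
Variables (U : finType) (r : rel U).
Hypotheses (rsym : symmetric r) (rirr : irreflexive r).

Definition adj_gen (B : {set U}) :=
  [forall a, forall b, r a b ==> [exists s in B, adj_dist r s a != adj_dist r s b]].

Definition scattered (B : {set U}) := [forall a, ~~ (B \subset openN r a)].

Lemma local_adj_genE (B : {set U}) : local_adj_gen r B = adj_gen B.
Proof.
apply: eq_forallb => a; apply: eq_forallb => b; congr (_ ==> _).
by apply: eq_existsb => s; rewrite !dist2_adj_dist.
Qed.

Lemma adj_gen_setT : adj_gen setT.
Proof.
apply/forallP=> a; apply/forallP=> b; apply/implyP=> rab.
apply/existsP; exists a; rewrite inE /adj_dist eqxx rab.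
by case: (a =P b) => // ab; rewrite ab rirr in rab.
Qed.

Lemma adj_gen_sub (B C : {set U}) : B \subset C -> adj_gen B -> adj_gen C.
Proof.
move=> BC /forallP gB; apply/forallP=> a; apply/forallP=> b; apply/implyP=> rab.
have /existsP[s /andP[sB ns]] := implyP (forallP (gB a) b) rab.
by apply/existsP; exists s; rewrite ns (subsetP BC).
Qed.

Lemma adj_gen_nonempty (B : {set U}) : adj_gen B -> ~~ edgeless r -> exists c, c \in B.
Proof.
move=> gB; rewrite /edgeless negb_forall => /existsP[a].
rewrite negb_forall => /existsP[b]; rewrite negbK => rab.
by have /existsP[s /andP[sB _]] := implyP (forallP (forallP gB a) b) rab; exists s.
Qed.

Lemma exists_adj_basis : exists2 B, adj_gen B & #|B| = adim_l r.
Proof.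
have gT : local_adj_gen r setT by rewrite local_adj_genE adj_gen_setT.
have [B gB E] := @bigmin_attained _ (local_adj_gen r) (fun S => #|S|) #|U| _ gT
  (max_card _).
by exists B; rewrite -?local_adj_genE.
Qed.

Lemma adim_l_le (B : {set U}) : adj_gen B -> adim_l r <= #|B|.
Proof. by move=> gB; apply: bigmin_le; rewrite local_adj_genE. Qed.

Lemma scattered_witness (B : {set U}) a :
  scattered B -> exists2 c, c \in B & adj_dist r c a != 1.
Proof.
move/forallP/(_ a)/subsetPn=> [c cB]; rewrite inE => nac.
by exists c => //; rewrite /adj_dist rsym (negbTE nac); case: (c =P a).
Qed.

Lemma scattered_nonempty (B : {set U}) : 0 < #|U| -> scattered B -> exists c, c \in B.
Proof.
by case/card_gt0P=> a _ /(scattered_witness a)[c cB _]; exists c.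
Qed.

Lemma adj_dist_openN (B : {set U}) a c :
  B \subset openN r a -> c \in B -> adj_dist r c a = 1.
Proof.
move=> /subsetP BN /BN; rewrite inE => rac.
rewrite /adj_dist rsym rac; case: eqP => // ca; by rewrite ca rirr in rac.
Qed.

Lemma edgeless_scattered (B : {set U}) c : edgeless r -> c \in B -> scattered B.
Proof.
move=> el cB; apply/forallP=> a; apply/subsetPn; exists c => //.
by rewrite inE (negbTE (forallP (forallP el a) c)).
Qed.

Lemma edgeless_in_classG : 0 < #|U| -> edgeless r -> in_classG r.
Proof.
move=> /card_gt0P[v _] el.
have a0 : adim_l r = 0.
  apply/eqP; rewrite -leqn0 -(cards0 U); apply: adim_l_le.
  by apply/forallP=> a; apply/forallP=> b; rewrite (negbTE (forallP (forallP el a) b)).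
apply/forallP=> B; apply/implyP=> /andP[_]; rewrite a0 cards_eq0 => /eqP ->.
by apply/existsP; exists v; rewrite sub0set.
Qed.

(* if [v |: B] lay in [N(w)], no vertex of [B] could separate the edge [wv] *)
Lemma scattered_setU1 (B : {set U}) v :
  adj_gen B -> B \subset openN r v -> scattered (v |: B).
Proof.
move=> gB BN; apply/forallP=> w; apply/negP=> /subsetP H.
have := H v (setU11 _ _); rewrite inE => rwv.
have /existsP[s /andP[sB]] := implyP (forallP (forallP gB w) v) rwv.
have sw : [set s] \subset openN r w by rewrite sub1set H ?setU1r.
by rewrite (adj_dist_openN sw (set11 s)) (adj_dist_openN BN sB).
Qed.

Lemma not_in_classG_scattered_basis :
  ~~ in_classG r -> exists B, [/\ adj_gen B, #|B| = adim_l r & scattered B].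
Proof.
rewrite negb_forall => /existsP[B]; rewrite negb_imply => /andP[/andP[gB /eqP cB]].
rewrite negb_exists => /forallP nB.
by exists B; split => //; rewrite -?local_adj_genE //; apply/forallP.
Qed.

Lemma in_classG_basis_not_scattered (B : {set U}) :
  in_classG r -> adj_gen B -> #|B| = adim_l r -> ~~ scattered B.
Proof.
move=> /forallP/(_ B) cG gB cB.
have /existsP[v Bv] : [exists v, B \subset openN r v].
  by apply: (implyP cG); rewrite /local_adj_basis local_adj_genE gB cB eqxx.
by rewrite negb_forall; apply/existsP; exists v; rewrite negbK.
Qed.

Lemma scattered_adj_gen_card (B : {set U}) :
  in_classG r -> adj_gen B -> scattered B -> adim_l r < #|B|.
Proof.
move=> cG gB sB; rewrite ltn_neqAle adim_l_le // andbT.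
by apply: contraTneq sB => E; apply: in_classG_basis_not_scattered.
Qed.

End AdjacencyGenerators.

Section Fibers.
Variables (V : finType) (T : V -> finType).

Definition fiber (S : {set lexV T}) i : {set T i} := [set a | Tagged T a \in S].

Definition of_fibers (F : forall i, {set T i}) : {set lexV T} :=
  [set x | tagged x \in F (tag x)].

Lemma fiber_of_fibers F i : fiber (of_fibers F) i = F i.
Proof. by apply/setP=> a; rewrite !inE. Qed.

Lemma card_fibers (S : {set lexV T}) : #|S| = \sum_i #|fiber S i|.
Proof.
rewrite -sum1_card (partition_big (@tag _ _) xpredT) //=.
apply: eq_bigr => i _; rewrite sum1_card -(card_imset (fiber S i) (@eq_from_Tagged _ T i)).
apply: eq_card => x; rewrite [in LHS]unfold_in /=; apply/andP/imsetP.
  by case: x => j c /= [xS /eqP ji]; subst j; exists c; rewrite ?inE.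
by case=> a; rewrite inE => aS ->; rewrite aS eqxx.
Qed.

End Fibers.

Lemma sum_mem_card (V : finType) (X : {set V}) : \sum_i (i \in X) = #|X|.
Proof.
by rewrite -sum1_card [RHS]big_mkcond /=; apply: eq_bigr => i _; case: (i \in X).
Qed.

Section Reduction.
Variables (V : finType) (e : rel V) (T : V -> finType) (eH : forall i, rel (T i)).

(* [X] collects the [i] in [I] whose fiber receives one vertex more than an
   adjacency basis of [H_i], which is what makes the fiber [scattered]; a fiber
   of a generator is nonempty exactly over the [occupied] vertices. *)
Definition spread (X : {set V}) i := (i \notin I_set eH) || (i \in X).
Definition occupied (X : {set V}) k := (k \in X) || ~~ edgeless (@eH k).

Definition reduced_gen (d : V -> V -> option nat) (X : {set V}) :=
  (X \subset I_set eH) && [forall i, forall j, e i j ==>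
    [|| spread X i, spread X j |
     [exists k, [&& k != i, k != j, occupied X k & d k i != d k j]]]].

Definition reduced_dim d := \big[minn/#|V|]_(X | reduced_gen d X) #|X|.

Definition fiber_adim_sum := \sum_i adim_l (@eH i).

Lemma reduced_gen_I d : reduced_gen d (I_set eH).
Proof.
rewrite /reduced_gen subxx; apply/forallP=> i; apply/forallP=> j; apply/implyP=> _.
by rewrite /spread; case: (i \in I_set eH).
Qed.

Unset Implicit Arguments.
Hypotheses (esym : symmetric e) (eirr : irreflexive e)
  (Hsym : forall i, symmetric (@eH i)) (Hirr : forall i, irreflexive (@eH i))
  (Tne : forall i, 0 < #|T i|).
Variables (D : lexV T -> lexV T -> option nat) (d : V -> V -> option nat).
Hypotheses (D_fiber : forall i (a b : T i),
              D (Tagged T a) (Tagged T b) = Some (adj_dist (@eH i) a b))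
  (D_tag : forall k i (c : T k) (a : T i), k != i -> D (Tagged T c) (Tagged T a) = d k i)
  (d_edge : forall i j, e i j -> d i j = Some 1).
Set Implicit Arguments.

Local Notation P := (lex_rel e eH).

Lemma exists_fiber_basis (X : {set V}) i : exists B : {set T i}, [&& adj_gen (@eH i) B,
  #|B| <= adim_l (@eH i) + (i \in X) & spread X i ==> scattered (@eH i) B].
Proof.
have [B0 gB0 cB0] := exists_adj_basis (Hirr i).
case si: (spread X i); last by exists B0; rewrite gB0 cB0 leq_addr.
case iI: (i \in I_set eH); last first.
  have [|B [gB cB sB]] := not_in_classG_scattered_basis (Hirr i).
    by move: iI; rewrite inE => /negbT.
  by exists B; rewrite gB cB leq_addr sB.
case sB0: (scattered (@eH i) B0); first by exists B0; rewrite gB0 cB0 leq_addr sB0.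
move/negbT: sB0; rewrite negb_forall => /existsP[v]; rewrite negbK => B0v.
exists (v |: B0); rewrite (scattered_setU1 (Hsym i) (Hirr i) gB0 B0v) implybT.
have iX : i \in X by move: si; rewrite /spread iI.
rewrite (adj_gen_sub (subsetUr _ _) gB0) iX cardsU1 cB0 addnC leq_add2l.
by case: (v \notin B0).
Qed.

Lemma local_gen_of_fibers (X : {set V}) (F : forall i, {set T i}) : reduced_gen d X ->
  (forall i, adj_gen (@eH i) (F i)) -> (forall i, spread X i -> scattered (@eH i) (F i)) ->
  local_gen P D (of_fibers F).
Proof.
move=> /andP[_ /forallP FX] gF sF.
apply/forallP=> -[i a]; apply/forallP=> -[l b]; apply/implyP.
case: (eqVneq i l) => [il|il].
  subst l; rewrite lex_rel_fiber // => eab.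
  have /existsP[s /andP[sFi ns]] := implyP (forallP (forallP (gF i) a) b) eab.
  by apply/existsP; exists (Tagged T s); rewrite inE /= sFi /= !D_fiber.
rewrite lex_rel_tag // => eil.
case/or3P: (implyP (forallP (FX i) l) eil) => [si|sl|/existsP[k /and4P[ki kl ok dk]]].
- have [c cF hc] := scattered_witness (Hsym i) a (sF i si).
  apply/existsP; exists (Tagged T c); rewrite inE /= cF /= D_fiber D_tag //.
  by rewrite d_edge.
- have [c cF hc] := scattered_witness (Hsym l) b (sF l sl).
  apply/existsP; exists (Tagged T c); rewrite inE /= cF /= D_fiber D_tag 1?eq_sym //.
  by rewrite d_edge 1?esym // eq_sym.
- have [c cF] : exists c, c \in F k.
    case/orP: ok => [kX|nel]; last exact: adj_gen_nonempty (gF k) nel.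
    by apply: (scattered_nonempty (Hsym k) (Tne k)); rewrite sF // /spread kX orbT.
  by apply/existsP; exists (Tagged T c); rewrite inE /= cF /= !D_tag.
Qed.

Lemma local_gen_of_reduced (X : {set V}) : reduced_gen d X ->
  exists2 S, local_gen P D S & #|S| <= fiber_adim_sum + #|X|.
Proof.
move=> rX; pose F i := xchoose (exists_fiber_basis X i).
have FP i := xchooseP (exists_fiber_basis X i).
exists (of_fibers F).
  apply: local_gen_of_fibers rX _ _ => i; first by case/and3P: (FP i).
  by case/and3P: (FP i) => _ _ /implyP.
rewrite card_fibers /fiber_adim_sum -sum_mem_card -big_split /=.
by apply: leq_sum => i _; rewrite fiber_of_fibers; case/and3P: (FP i).
Qed.

Lemma fiber_adj_gen (S : {set lexV T}) i : local_gen P D S -> adj_gen (@eH i) (fiber S i).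
Proof.
move=> /forallP gS; apply/forallP=> a; apply/forallP=> b; apply/implyP=> eab.
have := implyP (forallP (gS (Tagged T a)) (Tagged T b)).
rewrite lex_rel_fiber // => /(_ eab) /existsP[[k c] /andP[cS]].
case: (eqVneq k i) => [ki|ki]; last by rewrite !D_tag // eqxx.
by subst k; rewrite !D_fiber => ns; apply/existsP; exists c; rewrite inE cS.
Qed.

Definition scattered_fibers (S : {set lexV T}) : {set V} :=
  [set i | (i \in I_set eH) && scattered (@eH i) (fiber S i)].

Lemma reduced_gen_scattered_fibers (S : {set lexV T}) :
  local_gen P D S -> reduced_gen d (scattered_fibers S).
Proof.
move=> gS; apply/andP; split; first by apply/subsetP=> i; rewrite inE => /andP[].
apply/forallP=> i; apply/forallP=> l; apply/implyP=> eil.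
have not_spread j : spread (scattered_fibers S) j = false ->
    exists a, fiber S j \subset openN (@eH j) a.
  rewrite /spread [j \in scattered_fibers S]inE; case: (j \in I_set eH) => //=.
  by move/negbT; rewrite negb_forall => /existsP[a]; rewrite negbK; exists a.
case si: spread => //; case sl: spread => //=.
have [[a Sa] [b Sb]] := (not_spread i si, not_spread l sl).
have il : i != l := neq_of_edge eirr eil.
have := implyP (forallP (forallP gS (Tagged T a)) (Tagged T b)).
rewrite lex_rel_tag // => /(_ eil) /existsP[[k c] /andP[cS]].
have cSk : c \in fiber S k by rewrite inE.
case: (eqVneq k i) => [ki|ki].
  by subst k; rewrite D_fiber D_tag // (adj_dist_openN (Hsym i) (Hirr i) Sa cSk) d_edge.
case: (eqVneq k l) => [kl|kl].
  subst k; rewrite D_fiber D_tag // (adj_dist_openN (Hsym l) (Hirr l) Sb cSk).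
  by rewrite d_edge // esym.
rewrite !D_tag // => dk; apply/existsP; exists k; rewrite ki kl dk /= andbT /occupied.
case el: (edgeless (@eH k)); last by rewrite orbT.
by rewrite !inE (edgeless_in_classG (Hirr k) (Tne k) el) (edgeless_scattered el cSk).
Qed.

Lemma card_scattered_fibers (S : {set lexV T}) : local_gen P D S ->
  fiber_adim_sum + #|scattered_fibers S| <= #|S|.
Proof.
move=> gS; rewrite card_fibers /fiber_adim_sum -sum_mem_card -big_split /=.
apply: leq_sum => i _; have gSi := fiber_adj_gen i gS.
rewrite inE; case: andP => [[iI sSi]|_]; last by rewrite addn0 adim_l_le.
by rewrite addn1 (scattered_adj_gen_card (Hirr i)) //; move: iI; rewrite inE.
Qed.

Lemma local_dim_reduced :
  \big[minn/#|{: lexV T}|]_(S : {set lexV T} | local_gen P D S) #|S| =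
  fiber_adim_sum + reduced_dim d.
Proof.
apply: bigmin_card_shift; first by exists (I_set eH); apply: reduced_gen_I.
  exact: local_gen_of_reduced.
move=> S gS; exists (scattered_fibers S); first exact: reduced_gen_scattered_fibers.
exact: card_scattered_fibers.
Qed.

End Reduction.

Section TwinReduction.
Variables (V : finType) (e : rel V) (T : V -> finType) (eH : forall i, rel (T i))
  (rep : V -> V) (d : V -> V -> option nat).
Unset Implicit Arguments.
Hypotheses (esym : symmetric e) (eirr : irreflexive e)
  (Hirr : forall i, irreflexive (@eH i)) (Tne : forall i, 0 < #|T i|)
  (rep_valid : valid_choice e eH rep).
Set Implicit Arguments.
Hypotheses (d_refl : forall x, d x x = Some 0) (d_edge : forall i j, e i j -> d i j = Some 1)
  (d_twin_r : forall u w i, true_twins e u w -> i != u -> i != w -> d i w = d i u)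
  (d_twin_l : forall u w i, true_twins e u w -> i != u -> i != w -> d w i = d u i).

Local Notation I := (I_set eH).
Local Notation XE := (X_E e eH rep).

Definition dropped_twins := I :\: XE.

Definition rho_feasible (A : {set V}) := (A \subset XE) &&
  [forall x, forall y, relR e eH d rep x y ==> [exists a in A, d a x != d a y]].

Lemma X_E_sub_I u : u \in XE -> u \in I.
Proof. by rewrite inE => /andP[]. Qed.

Lemma dropped_twinsP u : u \in dropped_twins -> [/\ u \in I, in_twin_part e u & rep u != u].
Proof. by rewrite in_setD inE => /andP[+ uI]; rewrite uI negb_or negbK => /andP[]. Qed.

Lemma X_E_neq_dropped w z : w \in XE -> z \in dropped_twins -> w != z.
Proof. by move=> wX; apply: contraTneq => <-; rewrite in_setD wX. Qed.

Lemma rep_in_X_E u : u \in I -> in_twin_part e u -> rep u \in XE.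
Proof.
move=> uI tu; have [rI tw rep_eq] := rep_valid _ uI tu.
by rewrite inE rI (rep_eq _ rI tw) eqxx orbT.
Qed.

Lemma V_E_sub_X_E k : k \in V_E e eH -> k \in XE.
Proof.
rewrite !inE => /andP[nt el]; rewrite nt andbT.
exact: edgeless_in_classG (Hirr k) (Tne k) el.
Qed.

Lemma relR_sym x y : relR e eH d rep x y -> relR e eH d rep y x.
Proof.
case/and4P=> xX yX exy /forallP H; rewrite /relR xX yX esym exy /=.
apply/forallP=> u; apply/implyP=> C; rewrite eq_sym; apply: (implyP (H u)).
by move: C; rewrite -!andbA => /and3P[-> -> ->].
Qed.

(* [rep] chooses a single vertex in each twin class *)
Lemma twins_in_I_dropped u w : u \in I -> w \in I -> true_twins e u w -> u != w ->
  (u \in dropped_twins) || (w \in dropped_twins).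
Proof.
move=> uI wI tw uw; rewrite !in_setD uI wI !andbT -negb_and.
apply/negP=> /andP[uX wX]; have tu := in_twin_partP tw uw.
have tw' : in_twin_part e w by apply: in_twin_partP (true_twins_sym tw) _; rewrite eq_sym.
move: uX wX; rewrite !inE tu tw' /= => /andP[_ /eqP ru] /andP[_ /eqP rw].
have [_ _ rep_eq] := rep_valid _ uI tu.
by move: uw; rewrite -ru -rw (rep_eq w wI tw) eqxx.
Qed.

Lemma twin_not_endpoint u w i j : true_twins e u w -> u != w -> e i j ->
  u != j -> d u i != d u j -> w != i.
Proof.
move=> tw uw eij uj; apply: contra => /eqP wi; subst w.
by rewrite (d_edge (true_twins_edge tw uw)) d_edge // (true_twins_nbr tw) // eq_sym.
Qed.

Lemma separator_outside_V_E (X : {set V}) i j u : dropped_twins \subset X -> e i j ->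
  u \notin V_E e eH -> u != i -> u != j -> d u i != d u j ->
  exists k, [&& k != i, k != j, occupied eH X k & d k i != d k j].
Proof.
move=> sIX eij uVE ui uj du.
case elu: (edgeless (@eH u)); last by exists u; rewrite ui uj du /occupied elu orbT.
have /existsP[w /andP[wu tw]] : in_twin_part e u by move: uVE; rewrite inE elu andbT negbK.
have uw : u != w by rewrite eq_sym.
have wi : w != i by apply: twin_not_endpoint tw uw eij uj du.
have wj : w != j.
  by apply: twin_not_endpoint tw uw _ ui _; rewrite 1?esym // eq_sym.
have dw : d w i != d w j.
  by rewrite (d_twin_l tw) 1?eq_sym // (d_twin_l tw) 1?eq_sym.
case elw: (edgeless (@eH w)); last by exists w; rewrite wi wj dw /occupied elw orbT.
have inI k : edgeless (@eH k) -> k \in I.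
  by rewrite inE; apply: edgeless_in_classG (Hirr k) (Tne k).
case/orP: (twins_in_I_dropped (inI u elu) (inI w elw) tw uw) => [uD|wD].
  by exists u; rewrite ui uj du /occupied (subsetP sIX u uD).
by exists w; rewrite wi wj dw /occupied (subsetP sIX w wD).
Qed.

Lemma reduced_gen_of_rho A : rho_feasible A -> reduced_gen e eH d (dropped_twins :|: A).
Proof.
case/andP=> AX /forallP HA; apply/andP; split.
  by apply/subsetP=> u; rewrite inE => /orP[/dropped_twinsP[]|/(subsetP AX)/X_E_sub_I].
apply/forallP=> i; apply/forallP=> j; apply/implyP=> eij; rewrite /spread.
case iI: (i \in I) => //=; case iX: (i \in _ :|: A) => //=.
case jI: (j \in I) => //=; case jX: (j \in _ :|: A) => //=.
have [iXE iA] : i \in XE /\ i \notin A.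
  by move/negbT: iX; rewrite in_setU in_setD iI andbT negb_or negbK => /andP.
have [jXE jA] : j \in XE /\ j \notin A.
  by move/negbT: jX; rewrite in_setU in_setD jI andbT negb_or negbK => /andP.
case R: (relR e eH d rep i j).
  have /existsP[a /andP[aA da]] := implyP (forallP (HA i) j) R.
  apply/existsP; exists a; rewrite da /occupied inE aA orbT /= andbT.
  by apply/andP; split; [apply: contraNneq _ iA | apply: contraNneq _ jA] => <-.
move: R; rewrite /relR iXE jXE eij /= => /negbT; rewrite negb_forall => /existsP[u].
rewrite negb_imply -!andbA => /and4P[uVE ui uj du].
by apply/existsP; apply: separator_outside_V_E uVE ui uj du => //; apply: subsetUl.
Qed.

Section FromReduced.
Variable X : {set V}.
Hypothesis rX : reduced_gen e eH d X.

Lemma reduced_edge i j : e i j -> [|| spread eH X i, spread eH X j |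
  [exists k, [&& k != i, k != j, occupied eH X k & d k i != d k j]]].
Proof. by move=> eij; case/andP: rX => _ /forallP/(_ i)/forallP/(_ j)/implyP; apply. Qed.

Lemma unspread u : u \in I -> u \notin X -> spread eH X u = false.
Proof. by rewrite /spread => -> /negbTE ->. Qed.

Lemma unspread_twins_eq u v : u \in I -> v \in I -> u \notin X -> v \notin X ->
  true_twins e u v -> u = v.
Proof.
move=> uI vI uX vX tw; apply/eqP; apply: contraT => uv.
have := reduced_edge (true_twins_edge tw uv); rewrite !unspread //=.
by case/existsP=> k /and4P[ku kv _]; rewrite (d_twin_r tw ku kv) eqxx.
Qed.

Definition promoted := rep @: (dropped_twins :\: X).

Lemma promotedP r : r \in promoted ->
  exists u, [/\ u \in dropped_twins, u \notin X, true_twins e u r, u != r & r = rep u].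
Proof.
case/imsetP=> u /setDP[uD uX] ->; have [uI tu ru] := dropped_twinsP uD.
by have [_ tw _] := rep_valid _ uI tu; exists u; split; rewrite 1?eq_sym.
Qed.

Lemma promoted_sub r : r \in promoted -> [/\ r \in X, r \in XE & in_twin_part e r].
Proof.
move=> /promotedP[u [/dropped_twinsP[uI _ _] uX tw ur rE]]; subst r.
have [rI _ _] := rep_valid _ uI (in_twin_partP tw ur).
split; [|exact: rep_in_X_E (in_twin_partP tw ur)|].
  by apply: contraT => rX'; rewrite -(unspread_twins_eq uI rI uX rX' tw) eqxx in ur.
by apply: in_twin_partP (true_twins_sym tw) _; rewrite eq_sym.
Qed.

Lemma rep_injective : {in dropped_twins :\: X &, injective rep}.
Proof.
move=> u v /setDP[uD uX] /setDP[vD vX] E.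
have [[uI tu _] [vI tv _]] := (dropped_twinsP uD, dropped_twinsP vD).
have [[_ twu _] [_ twv _]] := (rep_valid _ uI tu, rep_valid _ vI tv).
by apply: unspread_twins_eq uI vI uX vX _; rewrite -E in twv;
  apply: true_twins_trans twu (true_twins_sym twv).
Qed.

Definition rho_part := (X :&: XE) :\: promoted.

Lemma rho_part_witness x y k : relR e eH d rep x y -> k != x -> k != y ->
  occupied eH X k -> d k x != d k y -> k \in rho_part.
Proof.
move=> /and4P[_ _ _ /forallP H] kx ky ok dk.
have kVE : k \in V_E e eH.
  by apply: contraT => nk; move: dk; rewrite (eqP (implyP (H k) _)) ?eqxx // nk kx ky.
move: (kVE); rewrite inE => /andP[nt el].
have kX : k \in X by move: ok; rewrite /occupied el orbF.
rewrite in_setD in_setI kX V_E_sub_X_E //= andbT.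
by apply: contraNN nt => /promoted_sub[].
Qed.

Lemma rho_part_self x y : relR e eH d rep x y -> x \in X -> x \notin promoted ->
  exists2 a, a \in rho_part & d a x != d a y.
Proof.
case/and4P=> xXE _ exy _ xX xP.
by exists x; rewrite ?d_refl ?d_edge // in_setD in_setI xP xX xXE.
Qed.

Lemma rho_part_promoted1 x y : relR e eH d rep x y -> x \in promoted -> y \notin promoted ->
  exists2 a, a \in rho_part & d a x != d a y.
Proof.
move=> R /promotedP[u [uD uX twu ux xE]] yP.
case/and4P: (R) => xXE yXE exy _.
have uI : u \in I by case/dropped_twinsP: uD.
have := reduced_edge (true_twins_nbr twu (X_E_neq_dropped yXE uD) exy); rewrite unspread //=.
case/orP=> [sy | /existsP[k /and4P[ku ky ok dk]]].
  have yX : y \in X by move: sy; rewrite /spread (X_E_sub_I yXE).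
  by have [a aA da] := rho_part_self (relR_sym R) yX yP; exists a; rewrite 1?eq_sym.
have [kx|kx] := eqVneq k x.
  by move: dk; rewrite kx (d_edge exy) d_edge ?eqxx // esym true_twins_edge.
have dk' : d k x != d k y by rewrite (d_twin_r twu).
by exists k => //; apply: rho_part_witness R kx ky ok dk'.
Qed.

(* when both ends are promoted, the edge between the twins they replace is
   separated by a vertex that also separates x and y *)
Lemma rho_part_promoted2 x y : relR e eH d rep x y -> x \in promoted -> y \in promoted ->
  exists2 a, a \in rho_part & d a x != d a y.
Proof.
move=> R /promotedP[u [uD uX twu ux xE]] /promotedP[v [vD vX twv vy yE]].
case/and4P: (R) => xXE yXE exy _.
have [[uI _ _] [vI _ _]] := (dropped_twinsP uD, dropped_twinsP vD).
have uv : u != v by apply: contraTneq exy => uv; rewrite xE yE uv eirr.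
have euy : e u y := true_twins_nbr twu (X_E_neq_dropped yXE uD) exy.
have euv : e u v.
  by rewrite esym (true_twins_nbr twv _ _) // 1?eq_sym // esym.
have := reduced_edge euv; rewrite !unspread //=.
case/existsP=> k /and4P[ku kv ok dk].
have exu : e x u by rewrite esym true_twins_edge.
have eyv : e y v by rewrite esym true_twins_edge.
have xy : x != y := neq_of_edge eirr exy.
have [kx|kx] := eqVneq k x.
  move: dk; rewrite kx (d_edge exu) -(d_twin_r twv (X_E_neq_dropped xXE vD) xy).
  by rewrite (d_edge exy) eqxx.
have [ky|ky] := eqVneq k y.
  move: dk; rewrite ky (d_edge eyv) -(d_twin_r twu (X_E_neq_dropped yXE uD)) 1?eq_sym //.
  by rewrite d_edge ?eqxx // esym.
have dk' : d k x != d k y by rewrite (d_twin_r twu) // (d_twin_r twv).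
by exists k => //; apply: rho_part_witness R kx ky ok dk'.
Qed.

Lemma rho_part_separates x y : relR e eH d rep x y -> x \in X ->
  exists2 a, a \in rho_part & d a x != d a y.
Proof.
move=> R xX; have [xP|xP] := boolP (x \in promoted); last exact: rho_part_self.
have [yP|yP] := boolP (y \in promoted); first exact: rho_part_promoted2.
exact: rho_part_promoted1.
Qed.

Lemma rho_feasible_rho_part : rho_feasible rho_part.
Proof.
apply/andP; split; first by apply/subsetP=> a; rewrite in_setD in_setI => /and3P[].
apply/forallP=> x; apply/forallP=> y; apply/implyP=> R.
case/and4P: (R) => xXE yXE exy _.
have inX z : z \in XE -> spread eH X z -> z \in X by rewrite /spread => /X_E_sub_I ->.
case/or3P: (reduced_edge exy) => [/(inX _ xXE) xX|/(inX _ yXE) yX|].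
- by have [a aA da] := rho_part_separates R xX; apply/existsP; exists a; rewrite aA.
- have [a aA da] := rho_part_separates (relR_sym R) yX.
  by apply/existsP; exists a; rewrite aA eq_sym.
- case/existsP=> k /and4P[kx ky ok dk].
  by apply/existsP; exists k; rewrite (rho_part_witness R) ?dk.
Qed.

(* [promoted] has one element for each dropped twin outside [X], and the
   dropped twins inside [X] are exactly [X :\: XE]. *)
Lemma card_rho_part : #|dropped_twins| + #|rho_part| <= #|X|.
Proof.
have XI : X \subset I by case/andP: rX.
have PX : promoted \subset X :&: XE.
  by apply/subsetP=> r /promoted_sub[rX' rXE _]; rewrite inE rX' rXE.
have c1 : #|promoted| = #|dropped_twins :\: X| := card_in_imset rep_injective.
have c2 : #|rho_part| = #|X :&: XE| - #|promoted| by rewrite cardsD (setIidPr PX).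
have c3 := cardsID X dropped_twins.
have c4 := cardsID XE X.
have c5 : X :\: XE = dropped_twins :&: X.
  apply/setP=> x; rewrite !in_setD in_setI in_setD.
  by case xX: (x \in X); rewrite ?andbF // (subsetP XI x xX) !andbT.
have c6 : #|promoted| <= #|X :&: XE| := subset_leq_card PX.
rewrite c5 in c4; lia.
Qed.

End FromReduced.

Lemma rho_feasible_X_E : rho_feasible XE.
Proof.
rewrite /rho_feasible subxx; apply/forallP=> x; apply/forallP=> y; apply/implyP.
by case/and4P=> xX _ exy _; apply/existsP; exists x; rewrite xX d_refl d_edge.
Qed.

Lemma reduced_dim_rho : reduced_dim e eH d = #|dropped_twins| + rho_gen e eH d rep.
Proof.
apply: (@bigmin_card_shift _ _ (reduced_gen e eH d) rho_feasible).
- by exists XE; apply: rho_feasible_X_E.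
- move=> A fA; exists (dropped_twins :|: A); first exact: reduced_gen_of_rho.
  by rewrite cardsU leq_subr.
- move=> X rX; exists (rho_part X); first exact: rho_feasible_rho_part.
  exact: card_rho_part.
Qed.

End TwinReduction.

Theorem theorem8 (V : finType) (e : rel V) (T : V -> finType)
  (eH : forall i, rel (T i)) (rep : V -> V) :
  symmetric e -> irreflexive e ->
  (forall x y, connect e x y) ->
  1 < #|V| ->
  (forall i, symmetric (eH i)) -> (forall i, irreflexive (eH i)) ->
  (forall i, 0 < #|T i|) ->
  valid_choice e eH rep ->
  (dim_l (lex_rel e eH) = adim_l (lex_rel e eH) <->
   rho e eH rep = rho' e eH rep).
Proof.
move=> esym eirr econn V2 Hsym Hirr Tne rep_valid.
have dim_l_lex : dim_l (lex_rel e eH) = fiber_adim_sum eH + reduced_dim e eH (dist e).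
  exact: (local_dim_reduced esym eirr Hsym Hirr Tne (dist_lex_fiber eH esym eirr econn V2 Tne)
    (dist_lex_tag eH esym eirr econn V2 Tne) (dist_edge eirr)).
have adim_l_lex : adim_l (lex_rel e eH) = fiber_adim_sum eH + reduced_dim e eH (dist2 e).
  exact: (local_dim_reduced esym eirr Hsym Hirr Tne (dist2_lex_fiber eH esym eirr econn V2 Tne)
    (dist2_lex_tag eH esym eirr econn V2 Tne) (dist2_edge eirr)).
have rho_eq : reduced_dim e eH (dist e) = #|dropped_twins e eH rep| + rho e eH rep.
  exact: reduced_dim_rho esym eirr Hirr Tne rep_valid (dist_refl e) (dist_edge eirr)
    (dist_twin_r esym eirr) (dist_twin_l esym eirr).
have rho'_eq : reduced_dim e eH (dist2 e) = #|dropped_twins e eH rep| + rho' e eH rep.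
  exact: reduced_dim_rho esym eirr Hirr Tne rep_valid (dist2_refl e) (dist2_edge eirr)
    (dist2_twin_r esym eirr) (dist2_twin_l esym eirr).
by rewrite dim_l_lex adim_l_lex rho_eq rho'_eq; split => [/addnI/addnI | ->].
Qed.
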